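(* (a) There exists a tree-shift of finite type $X=\mathsf{X}_{\mathcal{F}}$, with $\mathcal{F}$ a finite set of patterns, which is strongly irreducible but not uniformly block gluing. (b) There exists a tree-shift which is uniformly block gluing but not strongly irreducible.
   Context: $\Sigma=\{0,1\}$. $\Sigma^*$ is the set of finite words, with $\epsilon$ the empty word. $|x|$ is the length of $x$, $\Sigma^k$ is the set of words of length $k$, and $\Sigma_n=\bigcup_{0\le k\le n}\Sigma^k$. A tree is $t:\Sigma^*\to\mathcal{A}$ with $\mathcal{A}$ finite, and we write $t_x=t(x)$. A pattern $u$ is a map on a finite prefix-closed support $S(u)$. A tree-shift is $\mathsf{X}_{\mathcal{F}}$, the set of trees in which no pattern of $\mathcal{F}$ occurs at any node. A pattern is accepted by $X$ if it occurs in some $t\in X$. $B_n(X)=\{t|_{\Sigma_{n-1}}:t\in X\}$. For $w\in\Sigma^*$, $t|_{wS(v)}=v$ means $t_{wy}=v_y$ for all $y\in S(v)$. A leaf of $u$ is $w\in S(u)$ with $w0,w1\notin S(u)$. A complete prefix code (CPC) is a finite set $P\subseteq\Sigma^*\setminus\{\epsilon\}$ such that no word of $P$ is a prefix of another, and every $x$ with $|x|\ge\max_{y\in P}|y|$ has a prefix in $P$. Patterns $u,v$ are connected through $P$ if there is $t\in X$ with $t|_{S(u)}=u$ and $t|_{wxS(v)}=v$ for every leaf $w$ of $u$ and every $x\in P$. $X$ is: - block gluing if there is a CPC $P$ such that for every $n\ge1$ any $u,v\in B_n(X)$ are connected through $P$; - uniformly block gluing if this holds with $P=\Sigma^k$ for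 some $k\ge1$; - strongly irreducible if there is a CPC $P$ through which any two patterns accepted by $X$ are connected; - uniformly strongly irreducible if this holds with $P=\Sigma^k$ for some $k\ge1$. *)

From mathcomp Require Import all_boot.
Set Implicit Arguments. Unset Strict Implicit. Unset Printing Implicit Defensive.

(* Words over Sigma = {0,1}: seq bool (false = 0, true = 1); epsilon = [::].
   The word w0 is rcons w false, w1 is rcons w true, concatenation is ++. *)
Definition word := seq bool.

Definition tree (A : Type) := word -> A.

(* A pattern: a finite support S(u) (listed) and its labelling;
   values outside the support are irrelevant. *)
Record pattern (A : Type) := Pattern { supp : seq word; pval : word -> A }.

Definition is_pattern (A : Type) (u : pattern A) : Prop :=
  forall x y : word, (x ++ y) \in supp u -> x \in supp u.

Definition occurs_at (A : Type) (t : tree A) (u : pattern A) (w : word) : Prop :=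
  forall y, y \in supp u -> t (w ++ y) = pval u y.

Definition XF (A : Type) (F : pattern A -> Prop) : tree A -> Prop :=
  fun t => forall u, F u -> forall w, ~ occurs_at t u w.

Definition accepted (A : Type) (X : tree A -> Prop) (u : pattern A) : Prop :=
  is_pattern u /\ exists t, X t /\ occurs_at t u [::].

Definition B_n (A : Type) (X : tree A -> Prop) (n : nat) (u : pattern A) : Prop :=
  (forall x : word, (x \in supp u) = (size x <= n.-1)) /\
  exists t, X t /\ occurs_at t u [::].

Definition leaf (A : Type) (u : pattern A) (w : word) : Prop :=
  w \in supp u /\ rcons w false \notin supp u /\ rcons w true \notin supp u.

Definition CPC (P : seq word) : Prop :=
  (forall x, x \in P -> x != [::]) /\
  (forall x y, x \in P -> y \in P -> prefix x y -> x = y) /\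
  (forall x : word, \max_(y <- P) size y <= size x -> exists2 y, y \in P & prefix y x).

Definition connected (A : Type) (X : tree A -> Prop) (P : word -> Prop)
  (u v : pattern A) : Prop :=
  exists t, X t /\ occurs_at t u [::] /\
    forall w x, leaf u w -> P x -> occurs_at t v (w ++ x).

Definition block_gluing (A : Type) (X : tree A -> Prop) : Prop :=
  exists P : seq word, CPC P /\
    forall n, 1 <= n -> forall u v, B_n X n u -> B_n X n v ->
      connected X (fun x => x \in P) u v.

Definition uniformly_block_gluing (A : Type) (X : tree A -> Prop) : Prop :=
  exists k, 1 <= k /\
    forall n, 1 <= n -> forall u v, B_n X n u -> B_n X n v ->
      connected X (fun x : word => size x == k) u v.

Definition strongly_irreducible (A : Type) (X : tree A -> Prop) : Prop :=
  exists P : seq word, CPC P /\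
    forall u v, accepted X u -> accepted X v -> connected X (fun x => x \in P) u v.

Definition uniformly_strongly_irreducible (A : Type) (X : tree A -> Prop) : Prop :=
  exists k, 1 <= k /\
    forall u v, accepted X u -> accepted X v ->
      connected X (fun x : word => size x == k) u v.

(* (a) Forbidding the two constant cherries leaves the trees in which no node
   carries the label of both its children.  Two accepted patterns u, v are glued
   through the prefix code {00, 01, 1}: below a leaf of u the 1-child starts a
   copy of a tree showing v at its root, and the 0-child is a bridge node labelled
   against the root of v, whose two children start such copies.  Gluing at a uniform distance k fails:
   placing the cherry (1; 0, 1) at every node of depth k+1 makes that level
   constant, and the forbidden cherries then force every level above it to be
   constant, contradicting the two different labels at depth 1.
   (b) Forbidding all patterns with two different labels on one level leaves the
   trees that are constant on levels.  Blocks of equal height are glued one level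
   below their leaves, but when the leaves of u lie at different depths, gluing
   through any prefix code brings two different levels of v onto the same level. *)

From mathcomp Require Import all_boot zify.
From Stdlib Require Lists.List.

Set Implicit Arguments. Unset Strict Implicit. Unset Printing Implicit Defensive.

Definition prefixes (w : word) : seq word := [seq take i w | i <- iota 0 (size w).+1].

Lemma mem_prefixes x w : (x \in prefixes w) = prefix x w.
Proof.
apply/mapP/idP => [[i _ ->]|px]; first exact: prefix_take.
exists (size x); first by rewrite mem_iota add0n ltnS size_prefix.
by apply/esym/eqP; rewrite -prefixE.
Qed.

Definition prefix_closure (ws : seq word) : seq word := flatten [seq prefixes w | w <- ws].

Lemma mem_prefix_closure x ws : (x \in prefix_closure ws) = has (prefix x) ws.
Proof.
elim: ws => [|w ws IH] //=.
by rewrite mem_cat mem_prefixes IH.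
Qed.

Definition tree_pattern (A : Type) (t : tree A) (ws : seq word) : pattern A :=
  Pattern (prefix_closure ws) t.

Lemma tree_pattern_is_pattern (A : Type) (t : tree A) ws : is_pattern (tree_pattern t ws).
Proof.
move=> x y; rewrite /= !mem_prefix_closure => /hasP [w wP xy_w].
by apply/hasP; exists w => //; apply: catl_prefix xy_w.
Qed.

Lemma occurs_tree_pattern (A : Type) (t : tree A) ws : occurs_at t (tree_pattern t ws) [::].
Proof. by []. Qed.

Definition cherry (c : bool) : pattern bool :=
  tree_pattern (fun _ => c) [:: [:: false]; [:: true]].

Definition cherries : seq (pattern bool) := [:: cherry true; cherry false].

Definition no_constant_cherry (t : tree bool) : Prop :=
  forall w, ~ (t (rcons w false) = t w /\ t (rcons w true) = t w).

Lemma occurs_cherry t c w :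
  occurs_at t (cherry c) w <-> [/\ t w = c, t (rcons w false) = c & t (rcons w true) = c].
Proof.
split=> [occ | [tw tw0 tw1]].
  by move: (occ [::] isT) (occ [:: false] isT) (occ [:: true] isT); rewrite cats0 !cats1.
by case=> [|[] [|b y]] //=; rewrite ?cats0 ?cats1.
Qed.

Lemma XF_cherriesP t :
  XF (fun u => List.In u cherries) t <-> no_constant_cherry t.
Proof.
split=> [Xt w [tw0 tw1] | Nt u Fu w].
  have Fc : List.In (cherry (t w)) cherries by case: (t w); [left | right; left].
  by apply: (Xt _ Fc w); apply/occurs_cherry.
have [c ->] : exists c, u = cherry c by case: Fu => [<-|[<-|[]]]; eexists.
by move/occurs_cherry=> [tw tw0 tw1]; apply: (Nt w); rewrite tw tw0 tw1.
Qed.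

Lemma level_parity t m n c :
  no_constant_cherry t -> (forall z, size z = m + n -> t z = c) ->
  forall z, size z = n -> t z = c (+) odd m.
Proof.
elim: m n => [|m IH] n Nt top z zn; first by rewrite addbF; apply: top.
have below z' : size z' = n.+1 -> t z' = c (+) odd m.
  by apply: IH => // z'' ?; apply: top; rewrite addSnnS.
have := Nt z; rewrite (below (rcons z false)) ?(below (rcons z true)) ?size_rcons ?zn //.
by rewrite /= addbN; case: (t z) (c (+) odd m) => [] [] // H; exfalso; apply: H.
Qed.

Definition leafb (A : Type) (u : pattern A) (w : word) : bool :=
  [&& w \in supp u, rcons w false \notin supp u & rcons w true \notin supp u].

Lemma leafP (A : Type) (u : pattern A) w : reflect (leaf u w) (leafb u w).
Proof. by apply: (iffP and3P) => [[]|[? []]]. Qed.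

Definition bridge_code : seq word := [:: [:: false; false]; [:: false; true]; [:: true]].

Section Graft.

Variables (u : pattern bool) (t0 t1 : tree bool).

Fixpoint graft (z y : word) {struct y} : bool :=
  match y with
  | [::] => t0 z
  | b :: y' =>
      if leafb u z then
        if b then t1 y' else if y' is _ :: y'' then t1 y'' else ~~ t1 [::]
      else graft (rcons z b) y'
  end.

Hypothesis pu : is_pattern u.

Lemma graft_cat z w y : z ++ w \in supp u -> graft z (w ++ y) = graft (z ++ w) y.
Proof.
elim: w z => [|b w IH] z zw /=; first by rewrite cats0.
have zb : rcons z b \in supp u by apply: (@pu _ w); rewrite cat_rcons.
have -> : leafb u z = false by rewrite /leafb; case: b {zw} zb => ->; rewrite ?andbF.
by rewrite IH cat_rcons.
Qed.

Lemma graft_supp w : w \in supp u -> graft [::] w = t0 w.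
Proof. by move=> wu; rewrite -[w in graft _ w]cats0 graft_cat. Qed.

Lemma graft_leaf w x y : leafb u w -> x \in bridge_code -> graft [::] (w ++ x ++ y) = t1 y.
Proof.
move=> lw; rewrite graft_cat; last by case/and3P: lw.
by rewrite !inE => /or3P [] /eqP -> /=; rewrite lw.
Qed.

Lemma graft_no_constant_cherry z :
  no_constant_cherry t0 -> no_constant_cherry t1 -> no_constant_cherry (graft z).
Proof.
move=> N0 N1 y; elim: y z => [|b y IH] z /=.
  case: ifP => _; last exact: N0.
  by case: (t1 [::]); case: (t0 z) => -[].
case: ifP => _; last exact: IH.
case: b; first exact: N1.
case: y {IH} => [|b y] /=; last exact: N1.
by case: (t1 [::]) => -[].
Qed.

End Graft.

Lemma CPC_bridge_code : CPC bridge_code.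
Proof.
split; [|split].
- by move=> x; rewrite !inE => /or3P [] /eqP ->.
- by move=> x y; rewrite !inE => /or3P [] /eqP -> /or3P [] /eqP ->.
- move=> x; rewrite !big_cons big_nil /=.
  case: x => [|[] [|[] x]] //= _.
  all: first [by exists [:: true]; rewrite /= ?prefix0s
             | by exists [:: false; true]; rewrite /= ?prefix0s
             | by exists [:: false; false]; rewrite /= ?prefix0s].
Qed.

Lemma cherries_strongly_irreducible : strongly_irreducible (XF (fun u => List.In u cherries)).
Proof.
exists bridge_code; split; first exact: CPC_bridge_code.
move=> u v [pu [t0 [/XF_cherriesP X0 o0]]] [_ [t1 [/XF_cherriesP X1 o1]]].
exists (graft u t0 t1 [::]); split; first exact/XF_cherriesP/graft_no_constant_cherry.
split=> [y yu | w x /leafP lw xP y yv].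
  by rewrite graft_supp //; apply: o0.
by rewrite -catA graft_leaf //; apply: o1.
Qed.

Definition split_cherry : pattern bool := tree_pattern (last true) [:: [:: false]; [:: true]].

Lemma split_cherry_block : B_n (XF (fun u => List.In u cherries)) 2 split_cherry.
Proof.
split; first by case=> [|[] [|b x]].
exists (last true); split=> //; apply/XF_cherriesP => w.
by rewrite !last_rcons => -[<-].
Qed.

Lemma cherries_not_uniformly_block_gluing :
  ~ uniformly_block_gluing (XF (fun u => List.In u cherries)).
Proof.
move=> [k [_ ubg]].
have [t [/XF_cherriesP Nt [o ov]]] := ubg 2 isT _ _ split_cherry_block split_cherry_block.
have top z : size z = k + 1 -> t z = true.
  case: z => [|b x] /=; rewrite addn1 // => -[/eqP xk].
  by have := ov [:: b] x (ltac:(by case: b)) xk [::] isT; rewrite cats0.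
have lev := level_parity Nt top.
by move: (o [:: false] isT) (o [:: true] isT); rewrite /= !lev // => ->.
Qed.

Section LevelConstant.

Variable A : eqType.

Definition level_constant (t : tree A) : Prop :=
  forall x y : word, size x = size y -> t x = t y.

Definition breaks_levels (u : pattern A) : Prop :=
  is_pattern u /\
  exists x y, [/\ x \in supp u, y \in supp u, size x = size y & pval u x != pval u y].

Lemma XF_breaks_levelsP t : XF breaks_levels t <-> level_constant t.
Proof.
split=> [Xt x y sxy | Lt u [_ [x [y [xu yu sxy txy]]]] w occ].
  have [//|txy] := eqVneq (t x) (t y); exfalso.
  apply: (Xt (tree_pattern t [:: x; y]) _ [::]); last exact: occurs_tree_pattern.
  split; first exact: tree_pattern_is_pattern.
  by exists x, y; rewrite !mem_prefix_closure /= !prefix_refl ?orbT.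
by move: txy; rewrite -(occ x xu) -(occ y yu) (Lt (w ++ x) (w ++ y)) ?eqxx // !size_cat sxy.
Qed.

Lemma level_constant_stack (tu tv : tree A) n :
  level_constant tu -> level_constant tv ->
  level_constant (fun z => if size z < n then tu z else tv (drop n z)).
Proof.
move=> Lu Lv x y sxy; rewrite sxy; case: ifP => _; first exact: Lu.
by apply: Lv; rewrite !size_drop sxy.
Qed.

Lemma level_constant_uniformly_block_gluing : uniformly_block_gluing (XF breaks_levels).
Proof.
exists 1; split=> // -[//|n] _ u v [su [tu [/XF_breaks_levelsP Lu ou]]].
move=> [_ [tv [/XF_breaks_levelsP Lv ov]]].
exists (fun z => if size z < n.+1 then tu z else tv (drop n.+1 z)).
split; first exact/XF_breaks_levelsP/level_constant_stack.
split=> [y yu | w x [wu [w0u _]] /eqP x1 y yv] /=.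
  by move: (yu); rewrite su ltnS /= => ->; apply: ou.
move: wu w0u; rewrite !su size_rcons /= => wn w0n.
have wxn : size (w ++ x) = n.+1 by rewrite size_cat x1; lia.
by rewrite size_cat wxn ltnNge leq_addr /= drop_size_cat //; apply: ov.
Qed.

Lemma level_constant_not_strongly_irreducible (a b : A) :
  a != b -> ~ strongly_irreducible (XF breaks_levels).
Proof.
move=> ab [P [[_ [_ P_complete]] si]].
have [x xP _] := P_complete (nseq (\max_(y <- P) size y) false) ltac:(by rewrite size_nseq).
have acc t ws : level_constant t -> accepted (XF breaks_levels) (tree_pattern t ws).
  move=> Lt; split; first exact: tree_pattern_is_pattern.
  by exists t; split; [exact/XF_breaks_levelsP | exact: occurs_tree_pattern].
pose u := tree_pattern (fun _ => a) [:: [:: false; false]; [:: false; true]; [:: true]].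
pose v := tree_pattern (fun y : word => if y is [::] then a else b) [:: [:: false]; [:: true]].
have Lv : level_constant (fun y : word => if y is [::] then a else b) by case=> [|? ?] [|? ?].
have [t [/XF_breaks_levelsP Lt [_ ov]]] :=
  si u v (acc (fun _ => a) _ (fun _ _ _ => erefl)) (acc _ _ Lv).
have l1 : leaf u [:: true] by apply/leafP.
have l00 : leaf u [:: false; false] by apply/leafP.
have := ov _ x l1 xP [:: false] isT; have := ov _ x l00 xP [::] isT.
rewrite /= cats0 => v_root v_child; move: ab.
rewrite -v_root -v_child (Lt (true :: x ++ [:: false]) [:: false, false & x]) ?eqxx //=.
by rewrite size_cat addn1.
Qed.

End LevelConstant.

Theorem proposition3p8 :
  (exists (A : finType) (F : seq (pattern A)),
      (forall u, Stdlib.Lists.List.In u F -> is_pattern u) /\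
      strongly_irreducible (XF (fun u => Stdlib.Lists.List.In u F)) /\
      ~ uniformly_block_gluing (XF (fun u => Stdlib.Lists.List.In u F))) /\
  (exists (A : finType) (F : pattern A -> Prop),
      (forall u, F u -> is_pattern u) /\
      uniformly_block_gluing (XF F) /\
      ~ strongly_irreducible (XF F)).
Proof.
split.
- exists bool, cherries; split; last split.
  + by move=> u [<-|[<-|[]]]; apply: tree_pattern_is_pattern.
  + exact: cherries_strongly_irreducible.
  + exact: cherries_not_uniformly_block_gluing.
- exists bool, (@breaks_levels bool); split; last split.
  + by move=> u [].
  + exact: level_constant_uniformly_block_gluing.
  + exact: (@level_constant_not_strongly_irreducible _ false true).
Qed.
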